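(* There exist an ACGS $\mathcal{M}=(\mathcal{G},\pi)$, a state $s$, an ATL/ATL$^\ast$ formula $\langle\langle A\rangle\rangle\phi$, and a strategy type $\sigma\in\{\mathtt{IR},\mathtt{Ir},\mathtt{iR},\mathtt{ir}\}$ such that $\pi(i)=\sigma$ for all $i\in A$ and $\mathcal{M},s\models \langle\langle A\rangle\rangle\phi$ holds, but $\mathcal{G},s\not\models_\sigma \langle\langle A\rangle\rangle\phi$.
   Context: A concurrent game structure (CGS) is $\mathcal{G}=(S,S_0,Ag,(Ac_i)_{i\in Ag},(\sim_i)_{i\in Ag},(P_i)_{i\in Ag},\Delta,\lambda)$ with states $S$, initial states $S_0$, agents $Ag$, local actions $Ac_i$, epistemic equivalence relations $\sim_i$, protocols $P_i$ (equal on $\sim_i$-equivalent states), transition function $\Delta:S\times\prod_i Ac_i\to S$ and labelling $\lambda:S\to 2^{AP}$. Strategy types: $\mathtt{Ir}$ (memoryless, perfect information: $S\to Ac$), $\mathtt{IR}$ (history-dependent, perfect information), $\mathtt{ir}$ (memoryless, uniform w.r.t. $\sim_i$), $\mathtt{iR}$ (history-dependent, uniform on $\sim_i$-indistinguishable histories); all respect protocols. Semantics over a CGS with type $\sigma$: $\mathcal{G},s\models_\sigma\langle\langle A\rangle\rangle\phi$ iff there is a collective $\sigma$-strategy of $A$ such that $\phi$ holds on every play from $s$ consistent with it, where the agents outside $A$ may use arbitrary $\mathtt{IR}$-strategies. An ACGS (agents' abilities augmented CGS) is a pair $\mathcal{M}=(\mathcal{G},\pi)$ where $\pi:Ag\to\{\mathtt{IR},\mathtt{Ir},\mathtt{iR},\mathtt{ir}\}$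 assigns each agent a strategy type (with $\sim_i$ the identity when $\pi(i)\in\{\mathtt{IR},\mathtt{Ir}\}$). Semantics over an ACGS: $\mathcal{M},s\models\langle\langle A\rangle\rangle\phi$ iff there is a collective strategy $\xi_A$ assigning each $i\in A$ a $\pi(i)$-strategy such that $\phi$ holds on every play $\mathrm{play}(s,\xi_A,\xi_{Ag\setminus A})$ where each agent $i\notin A$ uses a $\pi(i)$-strategy (not necessarily an $\mathtt{IR}$-strategy). *)

From Stdlib Require Import List.
Import ListNotations.
Set Implicit Arguments.

Definition AP := nat.

Record CGS := mkCGS {
  St : Type;
  Ag : Type;
  Act : Ag -> Type;
  init : St -> Prop;
  indist : Ag -> St -> St -> Prop;
  prot : forall i : Ag, St -> Act i -> Prop;
  delta : St -> (forall i : Ag, Act i) -> St;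
  lab : St -> AP -> Prop;
  St_fin : exists l : list St, forall s, In s l;
  Ag_fin : exists l : list Ag, forall i, In i l;
  Act_fin : forall i, exists l : list (Act i), forall a, In a l;
  init_ne : exists s, init s;
  indist_refl : forall i s, indist i s s;
  indist_sym : forall i s s', indist i s s' -> indist i s' s;
  indist_trans : forall i s s' s'', indist i s s' -> indist i s' s'' -> indist i s s'';
  prot_ne : forall (i : Ag) (s : St), exists a : Act i, prot s a;
  prot_unif : forall (i : Ag) (s s' : St) (a : Act i), indist i s s' -> (prot s a <-> prot s' a)
}.

Inductive stype := IR | Ir | iR | ir.

Definition memoryless (t : stype) : bool :=
  match t with Ir | ir => true | _ => false end.
Definition imperfect (t : stype) : bool :=
  match t with iR | ir => true | _ => false end.

Section Strategies.
Variable G : CGS.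

(** A history s_0 ... s_{k-1} s_k is represented as (past, current)
    with past = [s_0; ...; s_{k-1}] and current = s_k. *)
Definition hstrat (i : Ag G) := list (St G) -> St G -> Act G i.

(** [is_strat t i f]: f is a t-strategy of agent i.
    Memoryless strategies S -> Ac_i are represented as history strategies
    depending only on the current (last) state. *)
Definition is_strat (t : stype) (i : Ag G) (f : hstrat i) : Prop :=
  (forall past cur, prot G i cur (f past cur)) /\
  (memoryless t = true -> forall past past' cur, f past cur = f past' cur) /\
  (imperfect t = true ->
     forall past past' cur cur',
       Forall2 (indist G i) past past' -> indist G i cur cur' ->
       f past cur = f past' cur').

Definition path := nat -> St G.

Definition prefix (p : path) (n : nat) : list (St G) := map p (seq 0 n).

Definition is_play (s : St G) (F : forall i, hstrat i) (p : path) : Prop :=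
  p 0 = s /\
  forall n, p (S n) = delta G (p n) (fun i => F i (prefix p n) (p n)).

Definition suffix (p : path) (k : nat) : path := fun n => p (k + n).

Definition enforce (tA tO : Ag G -> stype) (A : list (Ag G))
    (Phi : path -> Prop) (s : St G) : Prop :=
  exists FA : forall i, hstrat i,
    (forall i, In i A -> is_strat (tA i) (FA i)) /\
    forall F : forall i, hstrat i,
      (forall i, In i A -> F i = FA i) ->
      (forall i, ~ In i A -> is_strat (tO i) (F i)) ->
      forall p, is_play s F p -> Phi p.

End Strategies.

Inductive sform (Agt : Type) :=
  | SAtom : AP -> sform Agt
  | SNot : sform Agt -> sform Agt
  | SAnd : sform Agt -> sform Agt -> sform Agt
  | SStrat : list Agt -> pform Agt -> sform Agt
with pform (Agt : Type) :=
  | PState : sform Agt -> pform Agt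
  | PNot : pform Agt -> pform Agt
  | PAnd : pform Agt -> pform Agt -> pform Agt
  | PNext : pform Agt -> pform Agt
  | PUntil : pform Agt -> pform Agt -> pform Agt.

Arguments SAtom {Agt}.

Section Sem.
Variable G : CGS.
Variable strat : list (Ag G) -> (path G -> Prop) -> St G -> Prop.

Fixpoint ssat (s : St G) (f : sform (Ag G)) {struct f} : Prop :=
  match f with
  | SAtom p => lab G s p
  | SNot f1 => ~ ssat s f1
  | SAnd f1 f2 => ssat s f1 /\ ssat s f2
  | SStrat A phi => strat A (fun p => psat p phi) s
  end
with psat (p : path G) (phi : pform (Ag G)) {struct phi} : Prop :=
  match phi with
  | PState f => ssat (p 0) f
  | PNot phi1 => ~ psat p phi1
  | PAnd phi1 phi2 => psat p phi1 /\ psat p phi2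
  | PNext phi1 => psat (suffix p 1) phi1
  | PUntil phi1 phi2 =>
      exists k, psat (suffix p k) phi2 /\
                forall j, j < k -> psat (suffix p j) phi1
  end.
End Sem.

Definition cgs_sat (sigma : stype) (G : CGS) (s : St G) (f : sform (Ag G)) : Prop :=
  ssat (enforce (fun _ => sigma) (fun _ => IR)) s f.

Record ACGS := mkACGS {
  cg : CGS;
  pi : Ag cg -> stype;
  pi_perfect : forall i, imperfect (pi i) = false ->
                 forall s s', indist cg i s s' <-> s = s'
}.

Definition acgs_sat (M : ACGS) (s : St (cg M)) (f : sform (Ag (cg M))) : Prop :=
  ssat (enforce (pi M) (pi M)) s f.

From Stdlib Require Import List FunctionalExtensionality.
Import ListNotations.
Set Implicit Arguments.

(* A single agent chooses the next state of a two-state game in which the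
   atom p = 0 holds exactly in state [true]; the coalition is empty, so only
   the opponent's abilities matter.  From state [false], the path
   false, false, true, ... needs memory: a memoryless profile that stays at
   [false] once stays there forever.  Hence an opponent restricted to [Ir]
   (as in the ACGS) cannot refute <<>> ~(X ~p /\ X X p), while an [IR]
   opponent (as in the CGS semantics) can. *)

Lemma memoryless_play_succ (G : CGS) (s : St G) (F : forall i, hstrat G i)
    (p : path G) (n m : nat) :
  (forall i past past' cur, F i past cur = F i past' cur) ->
  is_play s F p -> p n = p m -> p (S n) = p (S m).
Proof.
  intros Hmem [_ Hstep] Hnm.
  rewrite !Hstep, Hnm.
  f_equal; apply functional_extensionality_dep; intro i; apply Hmem.
Qed.

Definition choice_cgs : CGS.
Proof.
  refine (@mkCGS bool unit (fun _ => bool) (fun _ => True) (fun _ s s' => s = s')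
            (fun _ _ _ => True) (fun _ a => a tt) (fun s _ => s = true)
            _ _ _ _ _ _ _ _ _).
  - exists [true; false]; intros []; simpl; auto.
  - exists [tt]; intros []; simpl; auto.
  - intros _; exists [true; false]; intros []; simpl; auto.
  - exists true; exact I.
  - reflexivity.
  - intros; congruence.
  - intros; congruence.
  - intros; exists true; exact I.
  - intros; tauto.
Defined.

Definition memoryless_choice_acgs : ACGS.
Proof.
  refine (@mkACGS choice_cgs (fun _ => Ir) _).
  intros i _ s s'; simpl; tauto.
Defined.

Definition late_switch : pform unit :=
  PAnd (PNext (PNot (PState (SAtom 0)))) (PNext (PNext (PState (SAtom 0)))).

Lemma psat_late_switch (strat : list unit -> (path choice_cgs -> Prop) -> bool -> Prop)
    (p : path choice_cgs) :
  @psat choice_cgs strat p late_switch <-> p 1 <> true /\ p 2 = true.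
Proof. simpl; tauto. Qed.

Lemma acgs_sat_no_late_switch :
  acgs_sat memoryless_choice_acgs false (SStrat [] (PNot late_switch)).
Proof.
  exists (fun _ _ _ => true); split; [intros i [] |].
  intros F _ HF p Hplay Hlate.
  apply psat_late_switch in Hlate as [Hp1 Hp2].
  destruct (HF tt (fun H => H)) as [_ [Hmem _]].
  assert (Hp01 : p 0 = p 1) by (destruct Hplay as [-> _]; destruct (p 1); congruence).
  assert (Hp12 := memoryless_play_succ 0 1 (fun i => Hmem eq_refl) Hplay Hp01).
  congruence.
Qed.

Definition late_switcher (i : unit) : hstrat choice_cgs i :=
  fun past _ => match past with [] => false | _ => true end.

Definition late_switch_path : path choice_cgs :=
  fun n => match n with 0 | 1 => false | _ => true end.

Lemma late_switcher_play : @is_play choice_cgs false late_switcher late_switch_path.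
Proof. split; [reflexivity | intros [|[|n]]; reflexivity]. Qed.

Lemma cgs_sat_IR_late_switch :
  ~ cgs_sat IR choice_cgs false (SStrat [] (PNot late_switch)).
Proof.
  intros [FA [_ Hall]].
  apply (Hall late_switcher (fun i H => match H with end)) with (p := late_switch_path).
  - intros i _; split; [intros; exact I | split; discriminate].
  - exact late_switcher_play.
  - apply psat_late_switch; split; [discriminate | reflexivity].
Qed.

Theorem proposition1 :
  exists (M : ACGS) (s : St (cg M)) (A : list (Ag (cg M)))
         (phi : pform (Ag (cg M))) (sigma : stype),
    (forall i, In i A -> pi M i = sigma) /\
    acgs_sat M s (SStrat A phi) /\
    ~ cgs_sat sigma (cg M) s (SStrat A phi).
Proof.
  exists memoryless_choice_acgs, false, [], (PNot late_switch), IR.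
  split; [intros i [] | split].
  - exact acgs_sat_no_late_switch.
  - exact cgs_sat_IR_late_switch.
Qed.
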